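(* Let $0<r<1$ and let $A,B\in C_{1,r}$ be doubly commuting operators on a Hilbert space $\mathcal H$ (i.e. $AB=BA$ and $AB^*=B^*A$). Let $\mathcal H=\mathcal H_1\oplus\mathcal H_2$ be the canonical decomposition of $A$, where $\mathcal H_1$ is the maximal closed subspace reducing $A$ such that $A|_{\mathcal H_1}\in\mathcal C_{1,r}$ and $\mathcal H_2=\mathcal H\ominus\mathcal H_1$ (so $A|_{\mathcal H_2}$ is a c.n.u. $C_{1,r}$-contraction). Then $\mathcal H_1$ and $\mathcal H_2$ are reducing subspaces for $B$.
   Context: $C_{1,r}=\{T: T\text{ invertible},\ \|T\|\le1,\ \|rT^{-1}\|\le1\}$. $\mathcal C_{1,r}$ is the class of operators $J$ on a Hilbert space $\mathcal L$ for which there exist orthogonal projections $P_0,P_1$ on $\mathcal L$ with $P_0+P_1=I_{\mathcal L}$ and $J^*J=P_0+r^2P_1$. An operator $T\in C_{1,r}$ on $\mathcal H$ is a c.n.u. $C_{1,r}$-contraction if $\mathcal H$ has no non-zero closed subspace that reduces $T$ to an operator in $\mathcal C_{1,r}$. (Such a maximal reducing subspace $\mathcal H_1$ exists and the decomposition is unique.) *)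

From HB Require Import structures.
From mathcomp Require Import all_boot all_order all_algebra.
From mathcomp Require Import complex.
From mathcomp Require Import reals.
Set Implicit Arguments. Unset Strict Implicit. Unset Printing Implicit Defensive.
Import Order.TTheory GRing.Theory Num.Theory.
Local Open Scope ring_scope.
Local Open Scope complex_scope.

Section Hilbert.
Variables (R : realType) (V : lmodType R[i]) (ip : V -> V -> R[i]).

Definition is_inner_product : Prop :=
  [/\ (forall (a : R[i]) x y z, ip (a *: x + y) z = a * ip x z + ip y z),
      (forall x y, ip x y = (ip y x)^*),
      (forall x, 0 <= ip x x) &
      (forall x, ip x x = 0 -> x = 0)].

Definition hnorm (x : V) : R[i] := sqrtC (ip x x).

Definition converges (u : nat -> V) (l : V) : Prop :=
  forall e : R[i], 0 < e -> exists N, forall n, (N <= n)%N -> hnorm (u n - l) < e.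

Definition cauchy (u : nat -> V) : Prop :=
  forall e : R[i], 0 < e -> exists N, forall m n, (N <= m)%N -> (N <= n)%N ->
    hnorm (u m - u n) < e.

Definition complete : Prop := forall u, cauchy u -> exists l, converges u l.

Definition bounded_op (T : V -> V) : Prop :=
  (forall (a : R[i]) x y, T (a *: x + y) = a *: T x + T y) /\
  exists c : R[i], forall x, hnorm (T x) <= c * hnorm x.

Definition is_adjoint (T T' : V -> V) : Prop := forall x y, ip (T x) y = ip x (T' y).

Definition in_C1r (r : R[i]) (T : V -> V) : Prop :=
  bounded_op T /\
  (exists S : V -> V, [/\ bounded_op S, (forall x, S (T x) = x), (forall x, T (S x) = x)
                         & forall x, hnorm (r *: S x) <= hnorm x]) /\
  (forall x, hnorm (T x) <= hnorm x).

Definition closed_subspace (M : V -> Prop) : Prop :=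
  [/\ M 0, (forall (a : R[i]) x y, M x -> M y -> M (a *: x + y)) &
      (forall u l, (forall n, M (u n)) -> converges u l -> M l)].

Definition reduces (M : V -> Prop) (T T' : V -> V) : Prop :=
  (forall x, M x -> M (T x)) /\ (forall x, M x -> M (T' x)).

Definition ocompl (M : V -> Prop) : V -> Prop := fun x => forall y, M y -> ip x y = 0.

Definition orth_proj_on (M : V -> Prop) (P : V -> V) : Prop :=
  [/\ (forall x, M x -> M (P x)),
      (forall (a : R[i]) x y, M x -> M y -> P (a *: x + y) = a *: P x + P y),
      (forall x, M x -> P (P x) = P x) &
      (forall x y, M x -> M y -> ip (P x) y = ip x (P y))].

(* For M reducing T (with adjoint T'), the restriction J = T|_M has adjoint
   J^* = T'|_M; J in class \mathcal C_{1,r}: there are orthogonal projections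
   P0, P1 on M with P0 + P1 = I_M and J^* J = P0 + r^2 P1. *)
Definition restr_in_CC1r (r : R[i]) (M : V -> Prop) (T T' : V -> V) : Prop :=
  exists P0 P1 : V -> V,
    [/\ orth_proj_on M P0, orth_proj_on M P1,
        (forall x, M x -> P0 x + P1 x = x) &
        (forall x, M x -> T' (T x) = P0 x + (r ^+ 2) *: P1 x)].

End Hilbert.

(* The 𝒞_{1,r} part of A is cut out by the operator polynomial
   Q = (A^*A - 1)(A^*A - r^2): a reducing subspace M has A|_M in 𝒞_{1,r} iff
   Q vanishes on M, since then A^*A|_M has spectrum in {1, r^2} and its two
   eigenprojections are the required P0, P1.  Hence H_1 is the set of vectors x
   with Q(w x) = 0 for every word w in A and A^* (the largest such reducing
   subspace; it is closed because each Q w has an adjoint).  An operator that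
   commutes with A and A^* commutes with every Q w, so it leaves H_1 invariant;
   B and B^* do, by double commutativity, so H_1 reduces B, and so does its
   orthogonal complement. *)

From HB Require Import structures.
From mathcomp Require Import all_boot all_order all_algebra.
From mathcomp Require Import complex.
From mathcomp Require Import reals.
From mathcomp Require Import ring.
Import Order.TTheory GRing.Theory Num.Theory.
Local Open Scope ring_scope.
Local Open Scope complex_scope.
Set Implicit Arguments. Unset Strict Implicit. Unset Printing Implicit Defensive.

Section LinearMaps.
Variables (K : pzRingType) (U W : lmodType K) (f : U -> W).
Hypothesis f_lin : linear f.

Lemma lin0 : f 0 = 0.
Proof.
have := f_lin 1 0 0; rewrite scaler0 addr0 scale1r => f0.
by apply: (addrI (f 0)); rewrite addr0 -f0.
Qed.

Lemma linD x y : f (x + y) = f x + f y.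
Proof. by rewrite -[x]scale1r f_lin !scale1r. Qed.

Lemma linZ a x : f (a *: x) = a *: f x.
Proof. by rewrite -[a *: x]addr0 f_lin lin0 addr0. Qed.

Lemma linB x y : f (x - y) = f x - f y.
Proof. by rewrite linD -scaleN1r linZ scaleN1r. Qed.

End LinearMaps.

Section InnerProductSpace.
Variables (R : realType) (V : lmodType R[i]) (ip : V -> V -> R[i]).
Hypothesis ip_inner : is_inner_product ip.

Lemma ipC x y : ip x y = (ip y x)^*%R.
Proof. by case: ip_inner. Qed.

Lemma ip_ge0 x : 0 <= ip x x.
Proof. by case: ip_inner. Qed.

Lemma ip_eq0 x : ip x x = 0 -> x = 0.
Proof. by case: ip_inner => _ _ _; apply. Qed.

Lemma ipl_linear z : linear (ip^~ z : V -> R[i]^o).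
Proof. by move=> a x y; case: ip_inner => ->. Qed.

Lemma ip0l z : ip 0 z = 0.
Proof. exact: (lin0 (ipl_linear z)). Qed.

Lemma ipDl x y z : ip (x + y) z = ip x z + ip y z.
Proof. exact: (linD (ipl_linear z)). Qed.

Lemma ipZl a x z : ip (a *: x) z = a * ip x z.
Proof. exact: (linZ (ipl_linear z)). Qed.

Lemma ipNl x z : ip (- x) z = - ip x z.
Proof. by rewrite -scaleN1r ipZl mulN1r. Qed.

Lemma ipBl x y z : ip (x - y) z = ip x z - ip y z.
Proof. exact: (linB (ipl_linear z)). Qed.

Lemma ip0r z : ip z 0 = 0.
Proof. by rewrite ipC ip0l conjC0. Qed.

Lemma ipDr x y z : ip z (x + y) = ip z x + ip z y.
Proof. by rewrite [LHS]ipC ipDl rmorphD [ip z x]ipC [ip z y]ipC. Qed.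

Lemma ipZr a x z : ip z (a *: x) = a^*%R * ip z x.
Proof. by rewrite [LHS]ipC ipZl rmorphM [ip z x]ipC. Qed.

Lemma ipNr x z : ip z (- x) = - ip z x.
Proof. by rewrite -scaleN1r ipZr rmorphN1 mulN1r. Qed.

Lemma ipBr x y z : ip z (x - y) = ip z x - ip z y.
Proof. by rewrite [LHS]ipC ipBl rmorphB [ip z x]ipC [ip z y]ipC. Qed.

Lemma ip_extl u v : (forall z, ip u z = ip v z) -> u = v.
Proof. by move=> uv; apply/eqP; rewrite -subr_eq0; apply/eqP/ip_eq0; rewrite ipBl uv subrr. Qed.

Lemma ip_extr u v : (forall z, ip z u = ip z v) -> u = v.
Proof. by move=> uv; apply: ip_extl => z; rewrite ipC uv -ipC. Qed.

Lemma hnorm_ge0 x : 0 <= hnorm ip x.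
Proof. by rewrite sqrtC_ge0 ip_ge0. Qed.

Lemma hnorm_sqr x : hnorm ip x ^+ 2 = ip x x.
Proof. exact: sqrtCK. Qed.

Lemma normr_ip_le x y : `|ip x y| <= hnorm ip x * hnorm ip y.
Proof.
have [->|y0] := eqVneq y 0; first by rewrite ip0r normr0 mulr_ge0 ?hnorm_ge0.
set a := ip x y; set c := ip y y.
have c_gt0 : 0 < c by rewrite lt_def ip_ge0 andbT; apply: contra_neq y0; apply: ip_eq0.
have cJ : c^*%R = c by rewrite conj_Creal ?gtr0_real.
have key : 0 <= ip x x * c - a * a^*%R.
  have -> : ip x x * c - a * a^*%R = ip (x - (a / c) *: y) (x - (a / c) *: y) * c.
    rewrite !(ipBl, ipBr, ipZl, ipZr) -/c [ip y x]ipC -/a rmorphM fmorphV /= cJ.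
    by field; rewrite gt_eqF.
  exact: mulr_ge0 (ip_ge0 _) (ltW c_gt0).
rewrite -(ler_pXn2r (_ : 0 < 2)%N) ?nnegrE ?mulr_ge0 ?hnorm_ge0 //.
by rewrite normCK exprMn !hnorm_sqr -subr_ge0.
Qed.

Lemma ip_lim_eq0 (u : nat -> V) l v :
  (forall n, ip (u n) v = 0) -> converges ip u l -> ip l v = 0.
Proof.
move=> uv0 ul; apply/eqP; rewrite -normr_eq0; apply: contraT => b_neq0.
set b := `|ip l v| in b_neq0.
have b_gt0 : 0 < b by rewrite lt_def b_neq0 normr_ge0.
have v1_gt0 : 0 < hnorm ip v + 1 by rewrite ltr_wpDl ?hnorm_ge0.
have [N uN] := ul (b / (hnorm ip v + 1)) (divr_gt0 b_gt0 v1_gt0).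
have bN : b = `|ip (u N - l) v| by rewrite ipBl uv0 sub0r normrN.
have : b < b.
  rewrite {1}bN; apply: (le_lt_trans (normr_ip_le _ _)).
  apply: (le_lt_trans (ler_wpM2r (hnorm_ge0 v) (ltW (uN N (leqnn N))))).
  by rewrite mulrAC ltr_pdivrMr // ltr_pM2l // ltrDl.
by rewrite ltxx.
Qed.

Lemma adjoint_sym T T' : is_adjoint ip T T' -> is_adjoint ip T' T.
Proof. by move=> TT' x y; rewrite ipC -TT' -ipC. Qed.

Lemma adjoint_linear T T' : is_adjoint ip T T' -> linear T.
Proof. by move=> TT' a x y; apply: ip_extl => z; rewrite TT' !(ipDl, ipZl) -!TT'. Qed.

Lemma adjoint_comp F F' G G' :
  is_adjoint ip F F' -> is_adjoint ip G G' -> is_adjoint ip (F \o G) (G' \o F').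
Proof. by move=> FF' GG' x y /=; rewrite FF' GG'. Qed.

Lemma adjoint_commute F F' G G' : is_adjoint ip F F' -> is_adjoint ip G G' ->
  (forall x, F (G x) = G (F x)) -> forall x, F' (G' x) = G' (F' x).
Proof. by move=> FF' GG' FG x; apply: ip_extr => z; rewrite -FF' -GG' -FG FF' GG'. Qed.

Lemma adjoint_kernel_closed F F' (u : nat -> V) l : is_adjoint ip F F' ->
  (forall n, F (u n) = 0) -> converges ip u l -> F l = 0.
Proof.
move=> FF' Fu0 ul; apply: ip_extl => z; rewrite ip0l FF'.
by apply: ip_lim_eq0 ul => n; rewrite -FF' Fu0 ip0l.
Qed.

Lemma orth_proj_compl M P P' x :
  orth_proj_on ip M P -> orth_proj_on ip M P' ->
  (forall y, M y -> P y + P' y = y) -> M x -> P' (P x) = 0.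
Proof.
move=> [PM _ PP _] _ PP' Mx; apply: (addrI (P x)).
by rewrite addr0 -{1}(PP _ Mx) PP' //; apply: PM.
Qed.

Lemma ocompl_reduces M T T' :
  is_adjoint ip T T' -> reduces M T T' -> reduces (ocompl ip M) T T'.
Proof.
move=> TT' [MT MT']; split=> x xM y yM.
- by rewrite TT'; apply/xM/MT'.
- by rewrite (adjoint_sym TT'); apply/xM/MT.
Qed.

Section QuadraticCore.
Variables (r : R[i]) (A A' : V -> V).
Hypotheses (r_real : r \is Num.real) (r2_neq1 : r ^+ 2 != 1).
Hypothesis adjA : is_adjoint ip A A'.

Definition AstarA : V -> V := A' \o A.

Definition quadA x := AstarA (AstarA x) - (1 + r ^+ 2) *: AstarA x + r ^+ 2 *: x.

(* The eigenprojections of [A^*A] on the kernel of [quadA] are the Lagrange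
   interpolants of the points [1] and [r^2], which have this form. *)
Definition polyA (c1 c2 : R[i]) x := c1 *: AstarA x + c2 *: x.

Fixpoint word (w : seq bool) x :=
  if w is b :: w' then (if b then A else A') (word w' x) else x.

Fixpoint word_adj (w : seq bool) x :=
  if w is b :: w' then word_adj w' ((if b then A' else A) x) else x.

Definition quad_core x := forall w, quadA (word w x) = 0.

Lemma AstarA_adjoint : is_adjoint ip AstarA AstarA.
Proof. exact: adjoint_comp (adjoint_sym adjA) adjA. Qed.

Lemma quadA_adjoint : is_adjoint ip quadA quadA.
Proof.
have cJ c : c \is Num.real -> c^*%R = c by apply: conj_Creal.
move=> x y; rewrite /quadA !(ipDl, ipNl, ipZl, ipDr, ipNr, ipZr) !AstarA_adjoint.
by rewrite !cJ ?rpredD ?rpredX ?rpred1.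
Qed.

Lemma word_adjoint w : is_adjoint ip (word w) (word_adj w).
Proof.
elim: w => [|[] w IHw] x y //=; first by rewrite adjA IHw.
by rewrite (adjoint_sym adjA) IHw.
Qed.

Lemma word_cat w1 w2 x : word (w1 ++ w2) x = word w1 (word w2 x).
Proof. by elim: w1 => //= b w1 ->. Qed.

Lemma reduces_word M w x : reduces M A A' -> M x -> M (word w x).
Proof. by case=> MA MA'; elim: w x => [|[] w IHw] x Mx //=; [apply/MA | apply/MA']; apply: IHw. Qed.

Lemma quad_core_closed : closed_subspace ip quad_core.
Proof.
have Qw_lin w : linear (quadA \o word w).
  exact: adjoint_linear (adjoint_comp quadA_adjoint (word_adjoint w)).
split=> [w | a x y Qx Qy w | u l Qu ul w].
- exact: (lin0 (Qw_lin w)).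
- by rewrite -[quadA _]/((quadA \o word w) _) Qw_lin /= Qx Qy scaler0 addr0.
- exact: adjoint_kernel_closed (adjoint_comp quadA_adjoint (word_adjoint w)) (Qu^~ w) ul.
Qed.

Lemma quad_core_reduces : reduces quad_core A A'.
Proof. by split=> x Qx w; [rewrite -(word_cat w [:: true]) | rewrite -(word_cat w [:: false])]. Qed.

Lemma AstarA_linear : linear AstarA.
Proof. exact: adjoint_linear AstarA_adjoint. Qed.

Lemma AstarA_sqr x :
  quadA x = 0 -> AstarA (AstarA x) = (1 + r ^+ 2) *: AstarA x - r ^+ 2 *: x.
Proof. by move=> Qx; apply/eqP; rewrite -subr_eq0 -Qx opprB addrA addrAC. Qed.

Lemma quad_core_comb a b x y : quad_core x -> quad_core y -> quad_core (a *: x + b *: y).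
Proof.
have [Q0 Qcomb _] := quad_core_closed.
by move=> Qx Qy; apply: (Qcomb) Qx _; rewrite -[b *: y]addr0; exact: (Qcomb) Qy Q0.
Qed.

Lemma polyA_orth_proj c1 c2 : c1 \is Num.real -> c2 \is Num.real ->
  c1 * (c1 * (1 + r ^+ 2) + 2 * c2) = c1 -> c2 ^+ 2 - c1 ^+ 2 * r ^+ 2 = c2 ->
  orth_proj_on ip quad_core (polyA c1 c2).
Proof.
move=> c1_real c2_real c1E c2E; split.
- move=> x Qx; apply: quad_core_comb => //.
  by apply: (proj2 quad_core_reduces); apply: (proj1 quad_core_reduces).
- move=> a x y _ _; apply: ip_extl => z.
  by rewrite /polyA AstarA_linear !(ipDl, ipZl); ring.
- move=> x Qx; rewrite /polyA (linD AstarA_linear) !(linZ AstarA_linear).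
  rewrite AstarA_sqr ?(Qx [::]) //; apply: ip_extl => z; rewrite !(ipDl, ipNl, ipZl).
  set u := ip (AstarA x) z; set v := ip x z.
  transitivity ((c1 * (c1 * (1 + r ^+ 2) + 2 * c2) - c1) * u
                + (c2 ^+ 2 - c1 ^+ 2 * r ^+ 2 - c2) * v + (c1 * u + c2 * v)); first by ring.
  by rewrite c1E c2E !subrr !mul0r !add0r.
- move=> x y _ _; rewrite /polyA !(ipDl, ipZl, ipDr, ipZr) AstarA_adjoint.
  by rewrite !conj_Creal.
Qed.

Lemma quad_core_restr : restr_in_CC1r ip r quad_core A A'.
Proof.
have d_neq0 : 1 - r ^+ 2 != 0 by rewrite subr_eq0 eq_sym.
set c := (1 - r ^+ 2)^-1.
have c_real : c \is Num.real by rewrite rpredV rpredB ?rpred1 ?rpredX.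
exists (polyA c (- (c * r ^+ 2))), (polyA (- c) c); split.
- by apply: polyA_orth_proj; rewrite ?rpredN ?rpredM ?rpredX // /c; field.
- by apply: polyA_orth_proj; rewrite ?rpredN // /c; field.
- by move=> x _; apply: ip_extl => z; rewrite /polyA !(ipDl, ipZl) /c; field.
- move=> x _; apply: ip_extl => z; rewrite -[A' (A x)]/(AstarA x) /polyA.
  by rewrite !(ipDl, ipZl) /c; field.
Qed.

Lemma quadA_eq0_of_restr M x : restr_in_CC1r ip r M A A' -> M x -> quadA x = 0.
Proof.
case=> P0 [P1 [P0proj P1proj P01 AAM]] Mx.
have P10 y : M y -> P1 y + P0 y = y by move=> My; rewrite addrC P01.
have [P0M _ P0P0 _] := P0proj; have [P1M _ P1P1 _] := P1proj.
have [P0xM P1xM] := (P0M _ Mx, P1M _ Mx).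
have AA_P0 : AstarA (P0 x) = P0 x.
  by rewrite /AstarA /= AAM // P0P0 // (orth_proj_compl P0proj P1proj) // scaler0 addr0.
have AA_P1 : AstarA (P1 x) = r ^+ 2 *: P1 x.
  by rewrite /AstarA /= AAM // P1P1 // (orth_proj_compl P1proj P0proj) // add0r.
rewrite -(P01 _ Mx) (linD (adjoint_linear quadA_adjoint)) /quadA.
rewrite !AA_P0 AA_P1 (linZ AstarA_linear) AA_P1.
by apply: ip_extl => z; rewrite ip0l !(ipDl, ipNl, ipZl); ring.
Qed.

Lemma quad_core_max M : reduces M A A' -> restr_in_CC1r ip r M A A' ->
  forall x, M x -> quad_core x.
Proof. by move=> Mred Mcls x Mx w; apply: quadA_eq0_of_restr Mcls _; apply: reduces_word. Qed.

Lemma quad_core_stable F : linear F ->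
  (forall x, A (F x) = F (A x)) -> (forall x, A' (F x) = F (A' x)) ->
  forall x, quad_core x -> quad_core (F x).
Proof.
move=> Flin FA FA' x Qx w.
have Fword : word w (F x) = F (word w x) by elim: w => [|[] w /= ->].
have FQ y : quadA (F y) = F (quadA y).
  by rewrite /quadA /AstarA /= (linD Flin) (linB Flin) !(linZ Flin) !(FA, FA').
by rewrite Fword FQ Qx (lin0 Flin).
Qed.

End QuadraticCore.

End InnerProductSpace.

Theorem lemma3p5 (R : realType) (V : lmodType R[i]) (ip : V -> V -> R[i])
  (hip : is_inner_product ip) (hcomp : complete ip)
  (r : R[i]) (hr0 : 0 < r) (hr1 : r < 1)
  (A A' B B' : V -> V)
  (hA' : is_adjoint ip A A') (hB' : is_adjoint ip B B')
  (hA : in_C1r ip r A) (hB : in_C1r ip r B)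
  (hAB : forall x, A (B x) = B (A x)) (hAB' : forall x, A (B' x) = B' (A x))
  (H1 : V -> Prop)
  (hH1 : closed_subspace ip H1) (hH1red : reduces H1 A A')
  (hH1cls : restr_in_CC1r ip r H1 A A')
  (hH1max : forall M : V -> Prop, closed_subspace ip M -> reduces M A A' ->
              restr_in_CC1r ip r M A A' -> forall x, M x -> H1 x) :
  reduces H1 B B' /\ reduces (ocompl ip H1) B B'.
Proof.
have r_real : r \is Num.real := gtr0_real hr0.
have r2_neq1 : r ^+ 2 != 1 by rewrite lt_eqF // exprn_ilt1 ?ltW.
have H1_core x : H1 x <-> quad_core r A A' x.
  split=> [H1x | Qx]; first exact: (quad_core_max hip r_real hA' hH1red hH1cls H1x).
  apply: hH1max Qx; [exact: (quad_core_closed hip r_real hA') | exact: quad_core_reduces |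
                  exact: (quad_core_restr hip r_real r2_neq1 hA')].
have A'B x : A' (B x) = B (A' x) := adjoint_commute hip hA' (adjoint_sym hip hB') hAB' x.
have A'B' x : A' (B' x) = B' (A' x) := adjoint_commute hip hA' hB' hAB x.
have H1B : reduces H1 B B'.
  split=> x /H1_core H1x; apply/H1_core; apply: quad_core_stable H1x => //.
  - exact: (adjoint_linear hip hB').
  - exact: (adjoint_linear hip (adjoint_sym hip hB')).
by split; last exact: (ocompl_reduces hip hB' H1B).
Qed.
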